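(* A monoid $S$ is weakly right coherent if and only if $S^0$ is weakly right coherent.
   Context: For a semigroup $S$, $S^0$ denotes $S$ if $S$ has a zero, and otherwise $S$ with a zero adjoined. A semigroup $T$ is weakly right coherent if $T^1$ is weakly right coherent, where $T^1$ is $T$ if $T$ is a monoid and otherwise $T$ with an identity adjoined; a monoid $M$ is weakly right coherent if every finitely generated right ideal of $M$ is finitely presented as a right $M$-act (equivalently, known: $M$ is right ideal Howson and finitely right equated). *)

From Stdlib Require Import List ClassicalDescription ProofIrrelevance.
From mathcomp Require Import ssreflect ssrfun ssrbool eqtype ssrnat fintype.
Set Implicit Arguments. Unset Strict Implicit. Unset Printing Implicit Defensive.

Record monoid := Monoid {
  mcar :> Type;
  mop : mcar -> mcar -> mcar;
  mone : mcar;
  mopA : forall x y z, mop x (mop y z) = mop (mop x y) z;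
  mop1l : forall x, mop mone x = x;
  mop1r : forall x, mop x mone = x }.

Record ract (M : monoid) := RAct {
  acar :> Type;
  act : acar -> M -> acar;
  act1 : forall a, act a (mone M) = a;
  actA : forall a s t, act (act a s) t = act a (mop s t) }.

(** Free right M-act on n generators: 'I_n * M, with (i,s).t = (i, st).
    The right congruence on it generated by a list R of pairs. *)
Inductive gen_rcong (M : monoid) (n : nat) (R : list (('I_n * M) * ('I_n * M)))
  : 'I_n * M -> 'I_n * M -> Prop :=
| gc_base u v : In (u, v) R -> gen_rcong R u v
| gc_refl u : gen_rcong R u u
| gc_sym u v : gen_rcong R u v -> gen_rcong R v u
| gc_trans u v w : gen_rcong R u v -> gen_rcong R v w -> gen_rcong R u w
| gc_comp u v s : gen_rcong R u v ->
    gen_rcong R (u.1, mop u.2 s) (v.1, mop v.2 s).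

(** A is finitely presented: A is isomorphic to F_n / rho_R for a finite
    set R of relations, i.e. there is a surjective act morphism from the free
    act on n generators onto A whose kernel is the congruence generated by R. *)
Definition fin_presented (M : monoid) (A : ract M) : Prop :=
  exists (n : nat) (f : 'I_n * M -> A) (R : list (('I_n * M) * ('I_n * M))),
    (forall (i : 'I_n) (s t : M), f (i, mop s t) = act (f (i, s)) t) /\
    (forall a : A, exists u, f u = a) /\
    (forall u v, f u = f v <-> gen_rcong R u v).

Definition right_ideal (M : monoid) (I : M -> Prop) : Prop :=
  forall x s, I x -> I (mop x s).

Definition fin_gen_right_ideal (M : monoid) (I : M -> Prop) : Prop :=
  exists X : list M, forall y, I y <-> exists x s, In x X /\ y = mop x s.

Section IdealAct.
Variables (M : monoid) (I : M -> Prop) (HI : right_ideal I).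
Definition ideal_act_op (a : {x : M | I x}) (s : M) : {x : M | I x} :=
  exist _ (mop (proj1_sig a) s) (HI s (proj2_sig a)).
Lemma ideal_act1 a : ideal_act_op a (mone M) = a.
Proof. destruct a as [x Hx]; apply: eq_sig_hprop => /=;
  [intros; apply: proof_irrelevance | apply: mop1r]. Qed.
Lemma ideal_actA a s t :
  ideal_act_op (ideal_act_op a s) t = ideal_act_op a (mop s t).
Proof. destruct a as [x Hx]; apply: eq_sig_hprop => /=;
  [intros; apply: proof_irrelevance | symmetry; apply: mopA]. Qed.
Definition ideal_act : ract M := RAct ideal_act1 ideal_actA.
End IdealAct.

Definition weakly_right_coherent (M : monoid) : Prop :=
  forall (I : M -> Prop) (HI : right_ideal I),
    fin_gen_right_ideal I -> fin_presented (ideal_act HI).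

Definition is_zero (M : monoid) (z : M) : Prop :=
  forall x, mop z x = z /\ mop x z = z.
Definition has_zero (M : monoid) : Prop := exists z : M, is_zero z.

Section AdjZero.
Variable S : monoid.
Definition adj0_op (a b : option S) : option S :=
  match a, b with Some x, Some y => Some (mop x y) | _, _ => None end.
Lemma adj0_opA x y z : adj0_op x (adj0_op y z) = adj0_op (adj0_op x y) z.
Proof. by case: x; case: y; case: z => //= *; rewrite mopA. Qed.
Lemma adj0_op1l x : adj0_op (Some (mone S)) x = x.
Proof. by case: x => //= a; rewrite mop1l. Qed.
Lemma adj0_op1r x : adj0_op x (Some (mone S)) = x.
Proof. by case: x => //= a; rewrite mop1r. Qed.
Definition adjoin_zero : monoid := Monoid adj0_opA adj0_op1l adj0_op1r.
End AdjZero.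

Definition monoid0 (S : monoid) : monoid :=
  if excluded_middle_informative (has_zero S) then S else adjoin_zero S.

From Stdlib Require Import List ClassicalDescription ProofIrrelevance.
From mathcomp Require Import ssreflect ssrfun ssrbool eqtype ssrnat seq fintype.
Set Implicit Arguments. Unset Strict Implicit. Unset Printing Implicit Defensive.

(* If S has a zero then S^0 = S, so it suffices that S and S with a zero
   adjoined are weakly right coherent together, which holds for every S.
   Nonempty right ideals J of S ∪ {0} contain 0 and correspond to right ideals
   of S via J |-> J ∩ S and I |-> I ∪ {0}, preserving finite generation.  A
   presentation of J ∩ S over S gives one of J after adding a generator for 0
   and identifying every generator times 0 with it.  Conversely, in a
   presentation of I ∪ {0}, a chain of relations starting at a nonzero element
   never meets 0 (each step preserves the image), so the relations between
   nonzero elements present I over S, once the generators mapped to 0 are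
   redirected to a nonzero one. *)

Lemma proj1_sig_inj (T : Type) (P : T -> Prop) (a b : {x | P x}) :
  proj1_sig a = proj1_sig b -> a = b.
Proof. by move=> E; apply: eq_sig_hprop => // *; apply: proof_irrelevance. Qed.

Lemma In_enum (T : finType) (x : T) : In x (enum T).
Proof.
have : x \in enum T by rewrite mem_enum.
elim: (enum T) => //= y s IH; rewrite in_cons => /orP [/eqP ->|/IH]; by [left|right].
Qed.

Section Presentations.
Variables (M : monoid) (n : nat).
Implicit Types R : list (('I_n * M) * ('I_n * M)).

Lemma gen_rcong_subset R R' u v :
  (forall p, In p R -> In p R') -> gen_rcong R u v -> gen_rcong R' u v.
Proof.
move=> sRR'; elim=> *; [apply: gc_base; exact: sRR'|exact: gc_refl|exact: gc_sym
  |apply: gc_trans; eassumption|exact: gc_comp].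
Qed.

Lemma gen_rcong_map (N : monoid) m (h : 'I_n -> 'I_m) (phi : M -> N) R
    (R' : list (('I_m * N) * ('I_m * N))) :
  (forall s t, phi (mop s t) = mop (phi s) (phi t)) ->
  (forall u v, In (u, v) R -> In ((h u.1, phi u.2), (h v.1, phi v.2)) R') ->
  forall u v, gen_rcong R u v -> gen_rcong R' (h u.1, phi u.2) (h v.1, phi v.2).
Proof.
move=> phiM RR' u0 v0; elim=> [u v /RR'|u|u v _|u v w _ IH1 _ IH2|u v s _ IH] /=.
- exact: gc_base.
- exact: gc_refl.
- exact: gc_sym.
- exact: gc_trans IH1 IH2.
- by rewrite !phiM; exact: gc_comp IH.
Qed.

Lemma gen_rcong_ker (A : ract M) (f : 'I_n * M -> A) R :
  (forall i s t, f (i, mop s t) = act (f (i, s)) t) ->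
  (forall u v, In (u, v) R -> f u = f v) ->
  forall u v, gen_rcong R u v -> f u = f v.
Proof.
move=> fM fR u0 v0; elim=> [|//|//|u v w _ -> //|[i s] [j t] r _ /= E]; first exact: fR.
by rewrite !fM E.
Qed.

End Presentations.

Lemma fin_presented_empty (M : monoid) (A : ract M) : (A -> False) -> fin_presented A.
Proof.
have noI0 : 'I_0 -> False by case.
move=> A_empty; exists 0, (fun u => False_rect _ (noI0 u.1)), nil.
split; [|split]; [by move=> i; case: (noI0 i)|by move=> a; case: (A_empty a)|].
by move=> u; case: (noI0 u.1).
Qed.

Lemma fin_gen_right_ideal_empty_or_inhabited (M : monoid) (I : M -> Prop) :
  fin_gen_right_ideal I -> (forall x, ~ I x) \/ (exists x, I x).
Proof.
case=> [[|x X] HX]; first by left=> y /HX [? [? [[]]]].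
right; exists x; apply/HX; exists x, (mone M); split; [left|rewrite mop1r] => //.
Qed.

Section IdealsOfAdjoinZero.
Variable S : monoid.
Local Notation S0 := (adjoin_zero S).

Definition trace_ideal (J : S0 -> Prop) : S -> Prop := fun y => J (Some y).

Definition zero_ext_ideal (I : S -> Prop) : S0 -> Prop :=
  fun o => if o is Some y then I y else True.

Lemma trace_right_ideal J : right_ideal J -> right_ideal (trace_ideal J).
Proof. by move=> HJ x s; exact: HJ (Some x) (Some s). Qed.

Lemma zero_ext_right_ideal I : right_ideal I -> right_ideal (zero_ext_ideal I).
Proof. by move=> HI [x|] [s|] //=; exact: HI. Qed.

Definition somes (l : list S0) : list S :=
  flat_map (fun o => if o is Some x then x :: nil else nil) l.

Lemma In_somes l x : In x (somes l) <-> In (Some x) l.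
Proof.
elim: l => [|[a|] l IH] /=; first by [].
- by split=> [[->|/IH]|[[->]|/IH]]; auto.
- by split=> [/IH|[//|/IH]]; auto.
Qed.

Lemma fin_gen_trace_ideal J :
  fin_gen_right_ideal J -> fin_gen_right_ideal (trace_ideal J).
Proof.
case=> X HX; exists (somes X) => y; split.
- case/HX=> [[x|] [[s|] [Xx //= [->]]]]; exists x, s; split=> //; exact/In_somes.
- case=> x [s [/In_somes Xx ->]]; apply/HX; by exists (Some x), (Some s).
Qed.

Lemma fin_gen_zero_ext_ideal I x0 :
  right_ideal I -> I x0 -> fin_gen_right_ideal I ->
  fin_gen_right_ideal (zero_ext_ideal I).
Proof.
move=> HI Ix0 [X HX]; exists (List.map Some X) => -[y|]; split=> //=.
- case/HX=> x [s [Xx ->]]; exists (Some x), (Some s); split=> //; exact: in_map.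
- case=> _ [[s|] [/in_map_iff [x [<- Xx]] //= [->]]].
  apply: HI; apply/HX; exists x, (mone S); split; [|rewrite mop1r] => //.
- case/HX: Ix0 => x [_ [Xx _]]; exists (Some x), None; split=> //; exact: in_map.
Qed.

End IdealsOfAdjoinZero.

Section PresentationWithZero.
Variables (S : monoid) (J : adjoin_zero S -> Prop) (HJ : right_ideal J) (J0 : J None).
Variables (n : nat) (f : 'I_n * S -> ideal_act (trace_right_ideal HJ))
  (R : list (('I_n * S) * ('I_n * S))).
Hypotheses (fM : forall i s t, f (i, mop s t) = act (f (i, s)) t)
  (f_onto : forall a, exists u, f u = a)
  (f_ker : forall u v, f u = f v <-> gen_rcong R u v).

Local Notation S0 := (adjoin_zero S).
Local Notation gen := ('I_n.+1 * S0)%type.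

(* The generator [ord_max] is mapped to 0, the others are lifted past it. *)
Definition with_zero_val (u : gen) : S0 :=
  match unlift ord_max u.1, u.2 with
  | Some i, Some s => Some (proj1_sig (f (i, s)))
  | _, _ => None
  end.

Lemma J_with_zero_val u : J (with_zero_val u).
Proof.
case: u => i o; rewrite /with_zero_val /=; case: (unlift _ i) => [i'|]; case: o => [s|] //.
exact: proj2_sig (f (i', s)).
Qed.

Definition with_zero_map (u : gen) : ideal_act HJ :=
  exist J (with_zero_val u) (J_with_zero_val u).

Lemma with_zero_valM i o t : with_zero_val (i, mop o t) = mop (with_zero_val (i, o)) t.
Proof.
rewrite /with_zero_val /=; case: (unlift _ i) => [i'|]; case: o => [s|]; case: t => [t|] //=.
by rewrite fM.
Qed.

Definition zero_gen : gen := (ord_max, Some (mone S)).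

Definition lift_rel (p : ('I_n * S) * ('I_n * S)) : gen * gen :=
  ((lift ord_max p.1.1, Some p.1.2), (lift ord_max p.2.1, Some p.2.2)).

Definition zero_rel (i : 'I_n.+1) : gen * gen := ((i, None), zero_gen).

Definition with_zero_rels := List.map lift_rel R ++ List.map zero_rel (enum 'I_n.+1).

Lemma with_zero_val_None_rcong u :
  with_zero_val u = None -> gen_rcong with_zero_rels u zero_gen.
Proof.
have zero_rel_in i : In (zero_rel i) with_zero_rels.
  by apply: in_or_app; right; apply: in_map; exact: In_enum.
case: u => i [s|] /=; last by move=> _; exact: gc_base (zero_rel_in i).
rewrite /with_zero_val /=; case: unliftP => [j ->|-> _] //.
have := gc_comp (Some s : S0) (gc_base (zero_rel_in ord_max)); rewrite /= mop1l.
by move/gc_sym/gc_trans; apply; exact: gc_base (zero_rel_in ord_max).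
Qed.

Lemma with_zero_val_Some u y : with_zero_val u = Some y ->
  exists i s, u = (lift ord_max i, Some s) /\ proj1_sig (f (i, s)) = y.
Proof.
case: u => i o; rewrite /with_zero_val /=; case: unliftP => [j ->|->] //.
by case: o => [s|] //= [<-]; exists j, s.
Qed.

Lemma with_zero_val_rels u v : In (u, v) with_zero_rels -> with_zero_val u = with_zero_val v.
Proof.
move=> uv_in; case: (in_app_or _ _ _ uv_in) => /in_map_iff [p [Ep Rp]].
- case: p Ep Rp => [[i s] [j t]] [<- <-] Rp; rewrite /with_zero_val /= !liftK.
  by congr (Some (proj1_sig _)); apply/f_ker; exact: gc_base.
- by case: Ep => <- <-; rewrite /with_zero_val /= unlift_none; case: unlift.
Qed.

Lemma fin_presented_with_zero : fin_presented (ideal_act HJ).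
Proof.
exists n.+1, with_zero_map, with_zero_rels; split; [|split].
- by move=> i o t; apply: proj1_sig_inj; exact: with_zero_valM.
- case=> [[y|] Jy].
  + have [[i s] E] := f_onto (exist _ y Jy : ideal_act (trace_right_ideal HJ)).
    exists (lift ord_max i, Some s); apply: proj1_sig_inj.
    by rewrite /= /with_zero_val /= liftK E.
  + by exists zero_gen; apply: proj1_sig_inj; rewrite /= /with_zero_val /= unlift_none.
- move=> u v; split; last first.
    apply: gen_rcong_ker => [i o t|u' v' /with_zero_val_rels E]; apply: proj1_sig_inj => //.
    exact: with_zero_valM.
  move/(f_equal (@proj1_sig _ _)) => /=; case gu: (with_zero_val u) => [y|] E.
  + have [i [s [-> fy]]] := with_zero_val_Some gu.
    have [j [t [-> fy']]] := with_zero_val_Some (esym E).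
    have Rst : gen_rcong R (i, s) (j, t) by apply/f_ker/proj1_sig_inj; rewrite fy fy'.
    apply: (@gen_rcong_map _ _ S0 _ (lift ord_max) Some R with_zero_rels _ _ _ _ Rst) => //.
    move=> u' v' Ruv.
    exact: in_or_app (or_introl (in_map lift_rel _ _ Ruv)).
  + exact: gc_trans (with_zero_val_None_rcong gu) (gc_sym (with_zero_val_None_rcong (esym E))).
Qed.

End PresentationWithZero.

Section PresentationWithoutZero.
Variables (S : monoid) (I : S -> Prop) (HI : right_ideal I) (x0 : S) (Ix0 : I x0).
Variables (n : nat) (g : 'I_n * adjoin_zero S -> ideal_act (zero_ext_right_ideal HI))
  (R : list (('I_n * adjoin_zero S) * ('I_n * adjoin_zero S))).
Hypotheses (gM : forall i s t, g (i, mop s t) = act (g (i, s)) t)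
  (g_onto : forall a, exists u, g u = a)
  (g_ker : forall u v, g u = g v <-> gen_rcong R u v).

Local Notation S0 := (adjoin_zero S).
Local Notation gval u := (proj1_sig (g u)).

Lemma gvalM i o t : gval (i, adj0_op o t) = adj0_op (gval (i, o)) t.
Proof. by rewrite gM. Qed.

Lemma gval_None i : gval (i, None) = None.
Proof. by move: (gvalM i None None) => /= ->; case: (gval _). Qed.

Lemma gval_Some i s : gval (i, Some s) = adj0_op (gval (i, Some (mone S))) (Some s).
Proof. by rewrite -gvalM /= mop1l. Qed.

Lemma gval_eq u v : gval u = gval v <-> gen_rcong R u v.
Proof. by rewrite -g_ker; split=> [/proj1_sig_inj|->]. Qed.

Lemma gval_nonzero_form u : gval u <> None -> exists i s, u = (i, Some s).
Proof. by case: u => i [s|]; [exists i, s|rewrite gval_None]. Qed.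

Lemma exists_nonzero_gen : exists j0, gval (j0, Some (mone S)) <> None.
Proof.
have [[j o] E] := g_onto (exist (zero_ext_ideal I) (Some x0) Ix0).
move/(f_equal (@proj1_sig _ _)): E; case: o => [s|] /=; last by rewrite gval_None.
by rewrite gval_Some; exists j; move: E; case: (gval _).
Qed.

Variables (j0 : 'I_n) (gval_j0 : gval (j0, Some (mone S)) <> None).

Definition redirect (i : 'I_n) : 'I_n := if gval (i, Some (mone S)) is Some _ then i else j0.

Lemma gval_redirect i s : gval (redirect i, Some s) <> None.
Proof.
rewrite /redirect gval_Some; case E: (gval (i, Some (mone S))) => [y|]; first by rewrite E.
by rewrite gval_Some; case: (gval _) gval_j0.
Qed.

Lemma redirect_id i s : gval (i, Some s) <> None -> redirect i = i.
Proof. by rewrite /redirect gval_Some; case: (gval _). Qed.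

Lemma redirect_idem i : redirect (redirect i) = redirect i.
Proof. exact: redirect_id (@gval_redirect i (mone S)). Qed.

Definition without_zero_val (u : 'I_n * S) : S :=
  if gval (redirect u.1, Some u.2) is Some y then y else x0.

Lemma gval_redirect_val i s : gval (redirect i, Some s) = Some (without_zero_val (i, s)).
Proof. by rewrite /without_zero_val /=; case: (gval _) (@gval_redirect i s). Qed.

Lemma I_without_zero_val u : I (without_zero_val u).
Proof. by rewrite /without_zero_val; case: (g _) => -[y|] //. Qed.

Definition without_zero_map (u : 'I_n * S) : ideal_act HI :=
  exist I (without_zero_val u) (I_without_zero_val u).

Lemma without_zero_mapM i s t :
  without_zero_map (i, mop s t) = act (without_zero_map (i, s)) t.
Proof.
apply: proj1_sig_inj => /=; apply: Some_inj.
by rewrite -!gval_redirect_val [LHS](gvalM _ (Some s) (Some t)) gval_redirect_val.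
Qed.

Definition nonzero_rels : list (('I_n * S) * ('I_n * S)) :=
  flat_map (fun p : ('I_n * S0) * ('I_n * S0) =>
    match p with
    | ((i, Some s), (j, Some t)) =>
        if gval (i, Some s) is Some _ then ((i, s), (j, t)) :: nil else nil
    | _ => nil
    end) R.

Lemma In_nonzero_rels i s j t :
  In ((i, s), (j, t)) nonzero_rels <->
  In ((i, Some s), (j, Some t)) R /\ gval (i, Some s) <> None.
Proof.
split.
- case/in_flat_map=> [[[i' [s'|]] [j' [t'|]]] [Rp]] //.
  by case E: (gval _) => [y|] // [[<- <- <- <-]|//]; rewrite E.
- case=> Rp Gnz; apply/in_flat_map; exists ((i, Some s), (j, Some t)); split=> //.
  by move: Gnz; case: (gval _) => [y|] //= _; left.
Qed.

Definition redirect_rels :=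
  List.map (fun i => ((i, mone S), (redirect i, mone S))) (enum 'I_n).

Definition without_zero_rels := nonzero_rels ++ redirect_rels.

Lemma rcong_redirect i s : gen_rcong without_zero_rels (i, s) (redirect i, s).
Proof.
have Rel : In ((i, mone S), (redirect i, mone S)) without_zero_rels.
  by apply: in_or_app; right; apply: (in_map (fun i => (_, _))); exact: In_enum.
by move: (gc_comp s (gc_base Rel)) => /=; rewrite !mop1l.
Qed.

Lemma nonzero_derivation u v : gen_rcong R u v -> gval u <> None ->
  match u, v with
  | (i, Some s), (j, Some t) => gen_rcong nonzero_rels (i, s) (j, t)
  | _, _ => False
  end.
Proof.
have gval_rcong u' v' : gen_rcong R u' v' -> gval u' <> None -> gval v' <> None.
  by move/gval_eq=> <-.
elim=> [u' v' Ruv|u'|u' v' vRu IH|u' v' w uRv IH1 vRw IH2|[i o] [j o'] r _ IH] Gu.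
- have [i [s Eu]] := gval_nonzero_form Gu.
  have [j [t Ev]] := gval_nonzero_form (gval_rcong _ _ (gc_base Ruv) Gu); subst u' v'.
  by apply: gc_base; apply/In_nonzero_rels.
- by have [i [s ->]] := gval_nonzero_form Gu; exact: gc_refl.
- have Gv := gval_rcong _ _ (gc_sym vRu) Gu.
  have [i [s Eu]] := gval_nonzero_form Gu; have [j [t Ev]] := gval_nonzero_form Gv.
  by subst u' v'; exact: gc_sym (IH Gv).
- have Gv := gval_rcong _ _ uRv Gu; have Gw := gval_rcong _ _ vRw Gv.
  have [i [s Eu]] := gval_nonzero_form Gu; have [j [t Ev]] := gval_nonzero_form Gv.
  have [k [r Ew]] := gval_nonzero_form Gw; subst u' v' w.
  exact: gc_trans (IH1 Gu) (IH2 Gv).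
- move: Gu => /=; rewrite gvalM => Gu.
  have Go : gval (i, o) <> None by move: Gu; case: (gval _).
  move: (IH Go); clear IH; case: o Go Gu => [s|] Go Gu; last by rewrite gval_None in Go.
  case: o' => [t|] // sRt; case: r Gu => [r|] Gu /=; last by move: Gu; case: (gval _).
  exact: gc_comp r sRt.
Qed.

Lemma fin_presented_without_zero : fin_presented (ideal_act HI).
Proof.
exists n, without_zero_map, without_zero_rels; split; [exact: without_zero_mapM|split].
- case=> y Iy; have [[i o] E] := g_onto (exist (zero_ext_ideal I) (Some y) Iy).
  move/(f_equal (@proj1_sig _ _)): E; case: o => [s|] /= Gy; last by rewrite gval_None in Gy.
  have nz : gval (i, Some s) <> None by rewrite Gy.
  exists (i, s); apply: proj1_sig_inj; apply: Some_inj => /=.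
  by rewrite -gval_redirect_val (redirect_id nz).
- move=> [i s] [j t]; split; last first.
    apply: gen_rcong_ker; first exact: without_zero_mapM.
    move=> [i' s'] [j' t'] uv_in; apply: proj1_sig_inj => /=.
    case: (in_app_or _ _ _ uv_in) =>
      [/In_nonzero_rels [Rp nz]|/in_map_iff [k [[<- <- <- <-] _]]].
    + have E : gval (i', Some s') = gval (j', Some t') by apply/gval_eq/gc_base.
      have nz' : gval (j', Some t') <> None by rewrite -E.
      by apply: Some_inj; rewrite -!gval_redirect_val (redirect_id nz) (redirect_id nz') E.
    + by rewrite /without_zero_val /= redirect_idem.
  move/(f_equal (@proj1_sig _ _)) => /= EF.
  have hR : gen_rcong R (redirect i, Some s) (redirect j, Some t).
    by apply/gval_eq; rewrite !gval_redirect_val EF.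
  have /= Rs_deriv := nonzero_derivation hR (@gval_redirect i s).
  apply: gc_trans (rcong_redirect i s) _; apply: gc_trans _ (gc_sym (rcong_redirect j t)).
  by apply: gen_rcong_subset Rs_deriv => p p_in; apply: in_or_app; left.
Qed.

End PresentationWithoutZero.

Lemma weakly_right_coherent_adjoin_zero (S : monoid) :
  weakly_right_coherent S -> weakly_right_coherent (adjoin_zero S).
Proof.
move=> coh J HJ fgJ.
case: (fin_gen_right_ideal_empty_or_inhabited fgJ) => [J_empty|[o Jo]].
  by apply: fin_presented_empty => -[o Jo]; exact: J_empty Jo.
have J0 : J None by move: (HJ o None Jo); case: o {Jo}.
have [n [f [R [fM [f_onto f_ker]]]]] :=
  coh _ (trace_right_ideal HJ) (fin_gen_trace_ideal fgJ).
exact (fin_presented_with_zero J0 fM f_onto f_ker).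
Qed.

Lemma weakly_right_coherent_of_adjoin_zero (S : monoid) :
  weakly_right_coherent (adjoin_zero S) -> weakly_right_coherent S.
Proof.
move=> coh I HI fgI.
case: (fin_gen_right_ideal_empty_or_inhabited fgI) => [I_empty|[x0 Ix0]].
  by apply: fin_presented_empty => -[x Ix]; exact: I_empty Ix.
have [n [g [R [gM [g_onto g_ker]]]]] :=
  coh _ (zero_ext_right_ideal HI) (fin_gen_zero_ext_ideal HI Ix0 fgI).
have [j0 gval_j0] := exists_nonzero_gen Ix0 gM g_onto.
exact (fin_presented_without_zero Ix0 gM g_onto g_ker gval_j0).
Qed.

Theorem mainTheorem5 (S : monoid) :
  weakly_right_coherent S <-> weakly_right_coherent (monoid0 S).
Proof.
rewrite /monoid0; case: (excluded_middle_informative (has_zero S)) => //.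
split; [exact: weakly_right_coherent_adjoin_zero|exact: weakly_right_coherent_of_adjoin_zero].
Qed.
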